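(* Let $\hat N=\sum_{j\ge0}\hat n_j$ be the particle number operator and $\overline N=\langle\hat N\rangle_{\mathrm{gc}}$. Then $$\langle(\hat N-\overline N)^4\rangle_{\mathrm{gc}}\le9\langle(\hat N-\overline N)^2\rangle_{\mathrm{gc}}^2+\langle(\hat N-\overline N)^2\rangle_{\mathrm{gc}}.$$
   Context: Fix a nondecreasing sequence $(E_j)_{j\ge0}$ of nonnegative one-particle energies (temperature absorbed) and $\mu<E_0$. $\hat n_j=a_j^*a_j$ is the occupation number operator of level $j$ on bosonic Fock space, and $\langle\cdot\rangle_{\mathrm{gc}}$ is the expectation in the grand canonical Gibbs state $Z_{\mathrm{gc}}(\mu)^{-1}\exp(-\sum_j(E_j-\mu)\hat n_j)$, assumed to have finite partition function and moments. *)

From HB Require Import structures.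
From mathcomp Require Import all_boot all_order all_algebra.
From mathcomp Require Import all_classical all_reals all_analysis.
Set Implicit Arguments. Unset Strict Implicit. Unset Printing Implicit Defensive.
Import Order.TTheory GRing.Theory Num.Theory.
Local Open Scope classical_set_scope.
Local Open Scope ring_scope.

(* Occupation-number basis of the bosonic Fock space: finitely supported
   sequences (n_j)_{j>=0} of occupation numbers. *)
Definition config : set (nat -> nat) :=
  [set n | exists M : nat, forall j : nat, (M <= j)%N -> n j = 0%N].

Definition num_particles (R : realType) (n : nat -> nat) : R :=
  \sum_(j \in [set: nat]) ((n j)%:R : R).

Definition gc_energy (R : realType) (E : nat -> R) (mu : R) (n : nat -> nat) : R :=
  \sum_(j \in [set: nat]) ((E j - mu) * (n j)%:R).

Definition gc_weight (R : realType) (E : nat -> R) (mu : R) (n : nat -> nat) : R :=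
  expR (- gc_energy E mu n).

(* Unnormalised trace  Tr[ f(n^) exp(-sum (E_j-mu) n^_j) ]  for f >= 0
   (diagonal in the occupation basis), as an extended real. *)
Definition gc_trace (R : realType) (E : nat -> R) (mu : R)
  (f : (nat -> nat) -> R) : \bar R :=
  \esum_(n in config) (f n * gc_weight E mu n)%:E.

Definition Zgc (R : realType) (E : nat -> R) (mu : R) : \bar R :=
  gc_trace E mu (fun _ => 1).

(* Grand canonical expectation <f(n^)>_gc of a nonnegative diagonal observable
   (meaningful when the traces are finite). *)
Definition gc_expect (R : realType) (E : nat -> R) (mu : R)
  (f : (nat -> nat) -> R) : R :=
  fine (gc_trace E mu f) / fine (Zgc E mu).

Definition Nbar (R : realType) (E : nat -> R) (mu : R) : R :=
  gc_expect E mu (@num_particles R).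

Definition central_moment (R : realType) (E : nat -> R) (mu : R) (k : nat) : R :=
  gc_expect E mu (fun n => (@num_particles R n - Nbar E mu) ^+ k).

From HB Require Import structures.
From mathcomp Require Import all_boot all_order all_algebra.
From mathcomp Require Import all_classical all_reals all_analysis.
From mathcomp Require Import ring lra.
Set Implicit Arguments. Unset Strict Implicit. Unset Printing Implicit Defensive.
Import Order.TTheory GRing.Theory Num.Theory.
Import numFieldNormedType.Exports.
Local Open Scope classical_set_scope.
Local Open Scope ring_scope.

(* Restricted to the levels below L, the Gibbs weight is a product over levels,
   so the particle number is a sum of independent geometric variables.  A
   geometric variable with mean p has cumulants k2 = B := p + p^2 and
   k4 = B + 6 B^2; cumulants add over independent summands and
   6 (B + B')^2 >= 6 B^2 + 6 B'^2, so every truncation satisfies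
   k4 <= 6 k2^2 + k2.  The finiteness hypotheses let the truncated moments of
   order <= 4 converge to the full ones (monotone convergence), so the bound
   survives in the limit, and the fourth central moment is
   k4 + 3 k2^2 <= 9 k2^2 + k2. *)

Ltac expand_sums :=
  rewrite ?big_ord_recr ?big_ord0 /= ?binS ?bin0 ?bin0n ?subSS ?subn0 ?subnn /=.

Section Cumulants.
Variable R : realFieldType.
Implicit Types (g t m u v : nat -> R) (k : nat).

(* Moment sequences are unnormalised: [m k] is the k-th moment times the total
   mass [m 0]; [binconv g t] is the moment sequence of the sum of two
   independent variables with moment sequences [g] and [t]. *)
Definition binconv g t k : R := \sum_(i < k.+1) 'C(k, i)%:R * g (k - i)%N * t i.

Definition normalize m i : R := m i / m 0%N.

Definition cmoment m k : R :=
  \sum_(i < k.+1) 'C(k, i)%:R * (- normalize m 1) ^+ (k - i) * normalize m i.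

Definition cumulant4 m : R := cmoment m 4 - 3 * cmoment m 2 ^+ 2.

Definition cumulant_bounded m : Prop :=
  0 <= cmoment m 2 /\ cumulant4 m <= 6 * cmoment m 2 ^+ 2 + cmoment m 2.

Lemma binconv0 g t : binconv g t 0 = g 0%N * t 0%N.
Proof. by rewrite /binconv big_ord1 bin0 mul1r. Qed.

Lemma normalize_id u : u 0%N = 1 -> normalize u = u.
Proof. by move=> u0; apply/funext => i; rewrite /normalize u0 divr1. Qed.

Lemma normalize0 m : m 0%N != 0 -> normalize m 0 = 1.
Proof. exact: divff. Qed.

Lemma cmoment_normalize m k : m 0%N != 0 -> cmoment (normalize m) k = cmoment m k.
Proof. by move=> m0; rewrite /cmoment (@normalize_id (normalize m)) ?normalize0. Qed.

Lemma normalize_binconv g t : g 0%N != 0 -> t 0%N != 0 ->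
  normalize (binconv g t) = binconv (normalize g) (normalize t).
Proof.
move=> g0 t0; apply/funext => k; rewrite /normalize binconv0 /binconv mulr_suml.
by apply: eq_bigr => i _; field; apply/andP.
Qed.

Lemma cumulant4_normalize m : m 0%N != 0 -> cumulant4 (normalize m) = cumulant4 m.
Proof. by move=> m0; rewrite /cumulant4 !cmoment_normalize. Qed.

Lemma binconv0_neq0 g t : g 0%N != 0 -> t 0%N != 0 -> binconv g t 0 != 0.
Proof. by move=> g0 t0; rewrite binconv0 mulf_neq0. Qed.

Lemma cmoment2_normalized u : u 0%N = 1 -> cmoment u 2 = u 2%N - u 1%N ^+ 2.
Proof. by move=> u0; rewrite /cmoment normalize_id //; expand_sums; rewrite u0; ring. Qed.

Lemma cmoment4_normalized u : u 0%N = 1 ->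
  cmoment u 4 = u 4%N - 4 * u 3%N * u 1%N + 6 * u 2%N * u 1%N ^+ 2 - 3 * u 1%N ^+ 4.
Proof. by move=> u0; rewrite /cmoment normalize_id //; expand_sums; rewrite u0; ring. Qed.

Section Normalized.
Variables u v : nat -> R.
Hypotheses (u0 : u 0%N = 1) (v0 : v 0%N = 1).

Let uv0 : binconv u v 0 = 1.
Proof. by rewrite binconv0 u0 v0 mulr1. Qed.

Lemma cmoment2_binconv_normalized :
  cmoment (binconv u v) 2 = cmoment u 2 + cmoment v 2.
Proof.
rewrite (cmoment2_normalized uv0) (cmoment2_normalized u0) (cmoment2_normalized v0).
rewrite /binconv; expand_sums.
by rewrite u0 v0; ring.
Qed.

Lemma cumulant4_binconv_normalized :
  cumulant4 (binconv u v) = cumulant4 u + cumulant4 v.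
Proof.
rewrite /cumulant4 !(cmoment4_normalized uv0, cmoment4_normalized u0, cmoment4_normalized v0).
rewrite !(cmoment2_normalized uv0, cmoment2_normalized u0, cmoment2_normalized v0).
rewrite /binconv; expand_sums.
by rewrite u0 v0; ring.
Qed.

End Normalized.

Lemma cmoment2_binconv g t : g 0%N != 0 -> t 0%N != 0 ->
  cmoment (binconv g t) 2 = cmoment g 2 + cmoment t 2.
Proof.
move=> g0 t0; rewrite -[LHS](cmoment_normalize _ (binconv0_neq0 g0 t0)).
rewrite normalize_binconv // cmoment2_binconv_normalized ?normalize0 //.
by rewrite !cmoment_normalize.
Qed.

Lemma cumulant4_binconv g t : g 0%N != 0 -> t 0%N != 0 ->
  cumulant4 (binconv g t) = cumulant4 g + cumulant4 t.
Proof.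
move=> g0 t0; rewrite -[LHS](cumulant4_normalize (binconv0_neq0 g0 t0)).
rewrite normalize_binconv // cumulant4_binconv_normalized ?normalize0 //.
by rewrite !cumulant4_normalize.
Qed.

Lemma cumulant_bounded_binconv g t : g 0%N != 0 -> t 0%N != 0 ->
  cumulant_bounded g -> cumulant_bounded t -> cumulant_bounded (binconv g t).
Proof.
move=> g0 t0 [Bg Kg] [Bt Kt].
rewrite /cumulant_bounded cumulant4_binconv // cmoment2_binconv //.
split; first exact: addr_ge0.
have := mulr_ge0 Bg Bt; nra.
Qed.

Lemma cumulant_bounded_delta0 : cumulant_bounded (fun k => 0 ^+ k).
Proof.
rewrite /cumulant_bounded /cumulant4 cmoment4_normalized ?cmoment2_normalized ?expr0 //.
by rewrite !expr0n /=; lra.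
Qed.

Lemma solve_linear_fixpoint (q g0 x y : R) :
  g0 = 1 + q * g0 -> x = q * (y + x) -> x = q * g0 * y.
Proof.
move=> e0 ex.
have g0q : g0 * (1 - q) = 1 by rewrite mulrBr mulr1 {1}e0; ring.
have xq : x - q * x = q * y by rewrite {1}ex; ring.
transitivity (g0 * (x - q * x)); last by rewrite xq; ring.
by rewrite -[LHS]mul1r -g0q; ring.
Qed.

(* The recurrence is the one satisfied by [g k = \sum_m m^k q^m]. *)
Lemma cumulant_bounded_geometric q g : 0 <= q ->
  (forall k, (k <= 4)%N -> g k = (k == 0%N)%:R + q * \sum_(i < k.+1) 'C(k, i)%:R * g i) ->
  cumulant_bounded g.
Proof.
move=> q0 hg.
have e0 : g 0%N = 1 + q * g 0%N by rewrite {1}hg //; expand_sums; ring.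
have g0 : g 0%N != 0.
  by apply/eqP => g00; move: e0; rewrite g00 mulr0 addr0 => /eqP; rewrite eq_sym oner_eq0.
set p := q * g 0%N.
have e1 : g 1%N = p * g 0%N.
  by apply: solve_linear_fixpoint e0 _; rewrite {1}hg //; expand_sums; ring.
have e2 : g 2%N = p * (g 0%N + 2 * g 1%N).
  by apply: solve_linear_fixpoint e0 _; rewrite {1}hg //; expand_sums; ring.
have e3 : g 3%N = p * (g 0%N + 3 * g 1%N + 3 * g 2%N).
  by apply: solve_linear_fixpoint e0 _; rewrite {1}hg //; expand_sums; ring.
have e4 : g 4%N = p * (g 0%N + 4 * g 1%N + 6 * g 2%N + 4 * g 3%N).
  by apply: solve_linear_fixpoint e0 _; rewrite {1}hg //; expand_sums; ring.
set B := p + p ^+ 2.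
have c2 : cmoment g 2 = B.
  rewrite -(cmoment_normalize _ g0) cmoment2_normalized ?normalize0 // /normalize e2 e1.
  by rewrite /B; field.
have k4 : cumulant4 g = B + 6 * B ^+ 2.
  rewrite -(cumulant4_normalize g0) /cumulant4.
  rewrite cmoment4_normalized ?cmoment2_normalized ?normalize0 //.
  by rewrite /normalize e4 e3 e2 e1 /B; field.
have B0 : 0 <= B.
  have -> : B = q * g 0%N * (1 + q * g 0%N) by rewrite /B /p; ring.
  by rewrite -e0 -mulrA -expr2 mulr_ge0 ?sqr_ge0.
by rewrite /cumulant_bounded c2 k4; split => //; lra.
Qed.

Lemma cumulant_bounded_eq m m' : cumulant_bounded m ->
  (forall k, (k <= 4)%N -> m k = m' k) -> cumulant_bounded m'.
Proof.
move=> + mm'; rewrite /cumulant_bounded /cumulant4 /cmoment /normalize; expand_sums.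
by rewrite !mm'.
Qed.

Lemma cumulant_bounded_cmoment4 m : cumulant_bounded m ->
  cmoment m 4 <= 9 * cmoment m 2 ^+ 2 + cmoment m 2.
Proof. by rewrite /cumulant_bounded /cumulant4 => -[_]; lra. Qed.

Lemma exprn_le1D (x : R) k n : 0 <= x -> (k <= n)%N -> x ^+ k <= 1 + x ^+ n.
Proof.
move=> x0 kn; have [x1|x1] := leP x 1.
  by apply: le_trans (exprn_ile1 _ x0 x1) _; rewrite lerDl exprn_ge0.
by apply: le_trans (ler_weXn2l (ltW x1) kn) _; rewrite lerDr.
Qed.

End Cumulants.

Section ExtendedSums.
Variable R : realType.

Lemma fsbig_ord_below (F : nat -> R) L : (forall j, (L <= j)%N -> F j = 0) ->
  \sum_(j \in [set: nat]) F j = \sum_(j < L) F j.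
Proof.
move=> FL; rewrite fsbig_ord; apply/esym/fsbig_widen => // j [_ /=].
by move/negP; rewrite -leqNgt => /FL.
Qed.

Lemma esum_le_subset (T : choiceType) (A B : set T) (f : T -> \bar R) :
  A `<=` B -> (\esum_(i in A) f i <= \esum_(i in B) f i)%E.
Proof.
move=> AB; apply: ereal_sup_le => _ [F [finF FA] <-]; exists F => //.
by split => //; exact: subset_trans AB.
Qed.

Lemma esumZl (T : choiceType) (A : set T) (r : R) (f : T -> R) : 0 <= r ->
  \esum_(i in A) (r * f i)%:E = (r%:E * \esum_(i in A) (f i)%:E)%E.
Proof.
move=> r0; rewrite /esum -ereal_supZl //; last first.
  by apply/set0P; exists 0%E, set0; rewrite ?fsbig_set0 //; exact: fsets_set0.
congr ereal_sup; apply/seteqP; split => x /=.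
  move=> [F [finF FA] <-]; exists (\sum_(i \in F) (f i)%:E)%E; first by exists F.
  by rewrite !fsumEFin // -EFinM mulr_fsumr.
move=> [_ [F [finF FA] <-] <-]; exists F => //.
by rewrite !fsumEFin // -EFinM mulr_fsumr.
Qed.

Lemma esum_lincomb (T : choiceType) (A : set T) k (c : nat -> R) (f : nat -> T -> R) :
  (forall i, (i < k)%N -> 0 <= c i) -> (forall i x, (i < k)%N -> A x -> 0 <= f i x) ->
  \esum_(x in A) (\sum_(i < k) c i * f i x)%:E =
  (\sum_(i < k) (c i)%:E * \esum_(x in A) (f i x)%:E)%E.
Proof.
move=> c0 f0; under eq_esum do rewrite -sumEFin.
rewrite esum_sum => [|x i Ax _]; last by rewrite lee_fin mulr_ge0 ?c0 ?f0.
by apply: eq_bigr => i _; rewrite esumZl ?c0.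
Qed.

Lemma esum_nat_shift (f : nat -> \bar R) : (forall m, 0 <= f m)%E ->
  \esum_(m in [set: nat]) f m = (f 0%N + \esum_(m in [set: nat]) f m.+1)%E.
Proof.
move=> f0; rewrite (esumID [set 0%N]) // setTI esum_set1 // setTI.
congr (_ + _)%E; apply: reindex_esum; split.
- by [].
- by move=> m1 m2 _ _ [].
- by move=> m /= m0; exists m.-1 => //; rewrite prednK // lt0n; exact/eqP.
Qed.

End ExtendedSums.

Section MomentLimits.
Variables (R : realType) (T : Type) (F : set_system T).
Context {FF : Filter F}.
Implicit Types (u : T -> nat -> R) (m : nat -> R).

Lemma cvg_exprn (f : T -> R) (a : R) n :
  f x @[x --> F] --> a -> f x ^+ n @[x --> F] --> a ^+ n.
Proof.
move=> fa; elim: n => [|n IH].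
  by rewrite expr0; under eq_cvg do rewrite expr0; exact: cvg_cst.
by rewrite exprS; under eq_cvg do rewrite exprS; exact: cvgM.
Qed.

Lemma normalize_cvg u m i : m 0%N != 0 ->
  u x 0%N @[x --> F] --> m 0%N -> u x i @[x --> F] --> m i ->
  normalize (u x) i @[x --> F] --> normalize m i.
Proof. by move=> m0 u0 ui; apply: cvgM => //; exact: cvgV. Qed.

Lemma cmoment_cvg u m k : (0 < k)%N -> m 0%N != 0 ->
  (forall i, (i <= k)%N -> u x i @[x --> F] --> m i) ->
  cmoment (u x) k @[x --> F] --> cmoment m k.
Proof.
move=> k0 m0 um; rewrite /cmoment; apply: cvg_big => [|i _]; first exact: add_continuous.
have nu j : (j <= k)%N -> normalize (u x) j @[x --> F] --> normalize m j.
  by move=> jk; apply: normalize_cvg => //; exact: um.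
apply: cvgM; last by apply: nu; rewrite -ltnS ltn_ord.
apply: cvgM; first exact: cvg_cst.
apply: cvg_exprn; apply: cvgN; exact: nu.
Qed.

End MomentLimits.

Section GibbsSums.
Variables (R : realType) (E : nat -> R) (mu : R).
Local Notation N := (@num_particles R).
Local Notation w := (gc_weight E mu).

Definition config_below (L : nat) : set (nat -> nat) :=
  [set n | forall j, (L <= j)%N -> n j = 0%N].

Definition boltzmann_factor j : R := expR (- (E j - mu)).

Definition set_level (n : nat -> nat) (L m : nat) : nat -> nat :=
  fun j => if j == L then m else n j.

Definition moment_sum (A : set (nat -> nat)) k : \bar R :=
  \esum_(n in A) (N n ^+ k * w n)%:E.

Definition level_moment_sum j k : \bar R :=
  \esum_(m in [set: nat]) ((m%:R : R) ^+ k * boltzmann_factor j ^+ m)%:E.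

Lemma num_particles_ge0 n : 0 <= N n.
Proof. by apply: fsumr_ge0 => j _; exact: ler0n. Qed.

Lemma gc_weight_ge0 n : 0 <= w n.
Proof. exact: expR_ge0. Qed.

Lemma moment_term_ge0 n k : 0 <= N n ^+ k * w n.
Proof. by rewrite mulr_ge0 ?exprn_ge0 ?num_particles_ge0 ?gc_weight_ge0. Qed.

Lemma level_term_ge0 j k m : 0 <= (m%:R : R) ^+ k * boltzmann_factor j ^+ m.
Proof. by rewrite mulr_ge0 ?exprn_ge0 ?expR_ge0. Qed.

Lemma moment_sum_ge0 A k : (0 <= moment_sum A k)%E.
Proof. by apply: esum_ge0 => n _; rewrite lee_fin moment_term_ge0. Qed.

Lemma level_moment_sum_ge0 j k : (0 <= level_moment_sum j k)%E.
Proof. by apply: esum_ge0 => m _; rewrite lee_fin level_term_ge0. Qed.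

Lemma config_below_config L : config_below L `<=` config.
Proof. by move=> n nL; exists L. Qed.

Lemma config_below_mono L L' : (L <= L')%N -> config_below L `<=` config_below L'.
Proof. by move=> LL' n nL j /(leq_trans LL'); exact: nL. Qed.

Lemma config_below0 : config_below 0 = [set fun _ => 0%N].
Proof.
by apply/seteqP; split => [n n0 | _ ->] //=; apply/funext => j; exact: n0.
Qed.

Lemma config_below_set_level L n m :
  config_below L n -> config_below L.+1 (set_level n L m).
Proof.
move=> nL j Lj; rewrite /set_level ifN ?nL ?(ltnW Lj) //.
by rewrite neq_ltn Lj orbT.
Qed.

Lemma num_particles_below L n : config_below L n -> N n = \sum_(j < L) (n j)%:R.
Proof. by move=> nL; rewrite /num_particles (@fsbig_ord_below _ _ L) // => j /nL ->. Qed.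

Lemma gc_weight_below L n :
  config_below L n -> w n = \prod_(j < L) boltzmann_factor j ^+ n j.
Proof.
move=> nL; rewrite /gc_weight /gc_energy (@fsbig_ord_below _ _ L); last first.
  by move=> j /nL ->; rewrite mulr0.
rewrite -sumrN expR_sum; apply: eq_bigr => j _.
by rewrite -mulNr expRM_natr.
Qed.

Lemma num_particles_set_level L n m :
  config_below L n -> N (set_level n L m) = N n + m%:R.
Proof.
move=> nL; rewrite (num_particles_below (config_below_set_level m nL)).
rewrite (num_particles_below nL) big_ord_recr /= /set_level eqxx.
by congr (_ + _); apply: eq_bigr => i _; rewrite ifN // neq_ltn ltn_ord.
Qed.

Lemma gc_weight_set_level L n m :
  config_below L n -> w (set_level n L m) = w n * boltzmann_factor L ^+ m.
Proof.
move=> nL; rewrite (gc_weight_below (config_below_set_level m nL)).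
rewrite (gc_weight_below nL) big_ord_recr /= /set_level eqxx.
by congr (_ * _); apply: eq_bigr => i _; rewrite ifN // neq_ltn ltn_ord.
Qed.

Lemma num_particles0 : N (fun _ => 0%N) = 0.
Proof. by rewrite (@num_particles_below 0) ?big_ord0. Qed.

Lemma gc_weight0 : w (fun _ => 0%N) = 1.
Proof. by rewrite (@gc_weight_below 0) ?big_ord0. Qed.

Lemma moment_sum_below0 k : moment_sum (config_below 0) k = ((0 : R) ^+ k)%:E.
Proof.
rewrite /moment_sum config_below0 esum_set1 ?lee_fin ?moment_term_ge0 //.
by rewrite num_particles0 gc_weight0 mulr1.
Qed.

Lemma moment_sum0_ge1 A : A (fun _ => 0%N) -> (1 <= moment_sum A 0)%E.
Proof.
move=> A0; have : (moment_sum (config_below 0) 0 <= moment_sum A 0)%E.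
  by apply: esum_le_subset; rewrite config_below0 => _ ->.
by rewrite moment_sum_below0 expr0.
Qed.

Lemma esum_config_below_succ L (f : (nat -> nat) -> \bar R) : (forall n, 0 <= f n)%E ->
  \esum_(n in config_below L.+1) f n =
  \esum_(n in config_below L) \esum_(m in [set: nat]) f (set_level n L m).
Proof.
move=> f0; rewrite esum_esum //.
apply: (reindex_esum _ _ (fun p => set_level p.1 L p.2)); split.
- by move=> [n m] [/= nL _]; exact: config_below_set_level.
- move=> [n1 m1] [n2 m2] /set_mem[/= n1L _] /set_mem[/= n2L _] /= e.
  have em : m1 = m2 by have := congr1 (fun f => f L) e; rewrite /set_level eqxx.
  congr pair => //; apply/funext => j; have := congr1 (fun f => f j) e.
  by rewrite /set_level; case: eqP => [->|//]; rewrite n1L ?n2L.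
- move=> n nL; exists (set_level n L 0, n L).
    split => //= j Lj; rewrite /set_level; case: eqP => // /eqP jL.
    by apply: nL; rewrite ltn_neqAle eq_sym jL.
  by apply/funext => j; rewrite /set_level /=; case: eqP => [->|].
Qed.

Lemma esum_set_level_moment L n k : config_below L n ->
  (forall i, (i <= k)%N -> level_moment_sum L i \is a fin_num) ->
  \esum_(m in [set: nat]) (N (set_level n L m) ^+ k * w (set_level n L m))%:E =
  (\sum_(i < k.+1) ('C(k, i)%:R * fine (level_moment_sum L (k - i)) *
     (N n ^+ i * w n))%:E).
Proof.
move=> nL Lfin.
have term m : N (set_level n L m) ^+ k * w (set_level n L m) =
    \sum_(i < k.+1) ('C(k, i)%:R * (N n ^+ i * w n)) *
      ((m%:R : R) ^+ (k - i) * boltzmann_factor L ^+ m).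
  rewrite num_particles_set_level // gc_weight_set_level // addrC exprDn mulr_suml.
  by apply: eq_bigr => i _; rewrite -mulr_natr; ring.
under eq_esum do rewrite term.
rewrite (esum_lincomb (c := fun i => 'C(k, i)%:R * (N n ^+ i * w n))
    (f := fun i m => (m%:R : R) ^+ (k - i) * boltzmann_factor L ^+ m))
    => [|i _|i m _ _]; last first.
- exact: level_term_ge0.
- by rewrite mulr_ge0 ?moment_term_ge0.
apply: eq_bigr => i _.
rewrite -/(level_moment_sum L (k - i)) -[level_moment_sum L (k - i)]fineK ?Lfin ?leq_subr //.
by rewrite -EFinM; congr EFin; ring.
Qed.

Lemma moment_sum_below_succ L k :
  (forall i, (i <= k)%N -> level_moment_sum L i \is a fin_num) ->
  moment_sum (config_below L.+1) k =
  (\sum_(i < k.+1) ('C(k, i)%:R * fine (level_moment_sum L (k - i)))%:E *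
     moment_sum (config_below L) i)%E.
Proof.
move=> Lfin; rewrite /moment_sum esum_config_below_succ => [|n]; last first.
  by rewrite lee_fin moment_term_ge0.
under eq_esum => n nL do rewrite esum_set_level_moment // sumEFin.
rewrite (esum_lincomb (c := fun i => 'C(k, i)%:R * fine (level_moment_sum L (k - i)))
    (f := fun i (n : nat -> nat) => N n ^+ i * w n)) => [//|i _|i n _ _].
- by rewrite mulr_ge0 ?fine_ge0 ?level_moment_sum_ge0.
- exact: moment_term_ge0.
Qed.

Lemma level_moment_sum_fixpoint j k :
  (forall i, (i <= k)%N -> level_moment_sum j i \is a fin_num) ->
  level_moment_sum j k = ((k == 0%N)%:R + boltzmann_factor j *
    \sum_(i < k.+1) 'C(k, i)%:R * fine (level_moment_sum j i))%:E.
Proof.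
move=> jfin; rewrite {1}/level_moment_sum esum_nat_shift => [|m]; last first.
  by rewrite lee_fin level_term_ge0.
rewrite expr0n expr0 mulr1 EFinD; congr (_ + _)%E.
have term m : (m.+1%:R : R) ^+ k * boltzmann_factor j ^+ m.+1 =
    boltzmann_factor j *
      \sum_(i < k.+1) 'C(k, i)%:R * ((m%:R : R) ^+ i * boltzmann_factor j ^+ m).
  rewrite exprS -addn1 natrD addrC exprDn mulr_suml mulr_sumr.
  by apply: eq_bigr => i _; rewrite expr1n mul1r -mulr_natr; ring.
under eq_esum do rewrite term.
rewrite esumZl ?expR_ge0 // (esum_lincomb (c := fun i => 'C(k, i)%:R)
    (f := fun i m => (m%:R : R) ^+ i * boltzmann_factor j ^+ m))
    => [|i _|i m _ _]; last first.
- exact: level_term_ge0.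
- exact: ler0n.
rewrite EFinM -sumEFin; congr (_ * _)%E; apply: eq_bigr => i _.
by rewrite EFinM fineK // jfin // -ltnS ltn_ord.
Qed.

Lemma level_moment_sum_le j k : (level_moment_sum j k <= moment_sum config k)%E.
Proof.
have z : config_below j (fun _ => 0%N) by [].
rewrite /level_moment_sum /moment_sum.
rewrite (_ : \esum_(m in [set: nat]) _ =
    \esum_(n in set_level (fun _ => 0%N) j @` [set: nat]) (N n ^+ k * w n)%:E).
  apply: esum_le_subset => _ [m _ <-].
  exact: config_below_config (config_below_set_level m z).
rewrite esum_image => [|m1 m2 _ _ e]; last first.
  by have := congr1 (fun f => f j) e; rewrite /set_level eqxx.
apply: eq_esum => m _.
rewrite num_particles_set_level // gc_weight_set_level //.
by rewrite num_particles0 gc_weight0 add0r mul1r.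
Qed.

Lemma finite_config_below F : finite_set F -> F `<=` config ->
  exists L, F `<=` config_below L.
Proof.
move=> /finite_fsetP[X ->] Xconfig.
suff [L XL] : exists L, forall n, n \in finmap.enum_fset X -> config_below L n.
  by exists L => n /= nX; exact: XL.
have : forall n, n \in finmap.enum_fset X -> config n by move=> n nX; exact: Xconfig.
elim: (finmap.enum_fset X) => [|n s IH] sconfig; first by exists 0%N.
have [M nM] := sconfig n (mem_head _ _).
have [L sL] : exists L, forall m, m \in s -> config_below L m.
  by apply: IH => m ms; apply: sconfig; rewrite in_cons ms orbT.
exists (maxn M L) => m; rewrite in_cons => /predU1P[-> | ms].
  exact: config_below_mono (leq_maxl M L) _ nM.
exact: config_below_mono (leq_maxr M L) _ (sL m ms).
Qed.

Lemma moment_sum_below_cvg k :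
  moment_sum (config_below L) k @[L --> \oo] --> moment_sum config k.
Proof.
have -> : moment_sum config k = ereal_sup (range (fun L => moment_sum (config_below L) k)).
  apply/eqP; rewrite eq_le; apply/andP; split.
    apply: ge_ereal_sup => _ [F [finF Fconfig] <-].
    have [L FL] := finite_config_below finF Fconfig.
    apply: (@le_trans _ _ (moment_sum (config_below L) k)).
      by apply: ereal_sup_ubound; exists F.
    by apply: ereal_sup_ubound; exists L.
  by apply: ge_ereal_sup => _ [L _ <-]; exact/esum_le_subset/config_below_config.
apply: ereal_nondecreasing_cvgn => L L' LL'.
exact/esum_le_subset/config_below_mono.
Qed.
End GibbsSums.

Section GibbsMoments.
Variables (R : realType) (E : nat -> R) (mu : R).
Local Notation N := (@num_particles R).

Definition moments L k : R := fine (moment_sum E mu (config_below L) k).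
Definition level_moments j k : R := fine (level_moment_sum E mu j k).
Definition gc_moments k : R := fine (moment_sum E mu config k).

Hypothesis hZ : (Zgc E mu < +oo)%E.
Hypothesis hmom : (gc_trace E mu (fun n => (N n ^+ 4)%R) < +oo)%E.

Lemma Zgc_moment_sum : Zgc E mu = moment_sum E mu config 0.
Proof. by apply: eq_esum => n _; rewrite expr0. Qed.

Lemma moment_sum_config_fin k : (k <= 4)%N -> moment_sum E mu config k \is a fin_num.
Proof.
move=> k4; rewrite ge0_fin_numE ?moment_sum_ge0 //.
have Z0 := hZ; rewrite Zgc_moment_sum in Z0.
apply: le_lt_trans (lte_add_pinfty Z0 hmom).
rewrite -esumD => [|n _|n _]; last 2 first.
- by rewrite lee_fin moment_term_ge0.
- by rewrite lee_fin moment_term_ge0.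
apply: le_esum => n _; rewrite -EFinD lee_fin -mulrDl ler_wpM2r ?gc_weight_ge0 //.
by rewrite expr0 exprn_le1D ?num_particles_ge0.
Qed.

Lemma moment_sum_below_fin L k : (k <= 4)%N ->
  moment_sum E mu (config_below L) k \is a fin_num.
Proof.
move=> k4; rewrite ge0_fin_numE ?moment_sum_ge0 //.
apply: le_lt_trans (esum_le_subset _ (@config_below_config L)) _.
by rewrite -ge0_fin_numE ?moment_sum_ge0 ?moment_sum_config_fin.
Qed.

Lemma level_moment_sum_fin j k : (k <= 4)%N -> level_moment_sum E mu j k \is a fin_num.
Proof.
move=> k4; rewrite ge0_fin_numE ?level_moment_sum_ge0 //.
apply: le_lt_trans (level_moment_sum_le E mu j k) _.
by rewrite -ge0_fin_numE ?moment_sum_ge0 ?moment_sum_config_fin.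
Qed.

Lemma moments_succ L k : (k <= 4)%N ->
  moments L.+1 k = binconv (level_moments L) (moments L) k.
Proof.
move=> k4; rewrite /moments moment_sum_below_succ => [|i ik]; last first.
  exact/level_moment_sum_fin/(leq_trans ik k4).
rewrite (eq_bigr (fun i : 'I_k.+1 =>
  ('C(k, i)%:R * level_moments L (k - i) * moments L i)%:E)).
  by rewrite sumEFin.
move=> i _; have ik : (i <= k)%N by rewrite -ltnS.
rewrite !EFinM !fineK ?level_moment_sum_fin ?moment_sum_below_fin //.
- exact: leq_trans ik k4.
- exact: leq_trans (leq_subr i k) k4.
Qed.

Lemma level_moments_fixpoint j k : (k <= 4)%N ->
  level_moments j k = (k == 0%N)%:R +
    boltzmann_factor E mu j * \sum_(i < k.+1) 'C(k, i)%:R * level_moments j i.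
Proof.
move=> k4; rewrite /level_moments level_moment_sum_fixpoint // => i ik.
exact/level_moment_sum_fin/(leq_trans ik k4).
Qed.

Lemma level_moments0_ge1 j : 1 <= level_moments j 0.
Proof.
rewrite level_moments_fixpoint // big_ord1 bin0 mul1r lerDl mulr_ge0 ?expR_ge0 //.
exact/fine_ge0/level_moment_sum_ge0.
Qed.

Lemma moments0_ge1 L : 1 <= moments L 0.
Proof.
rewrite -lee_fin fineK ?moment_sum_below_fin //.
exact: moment_sum0_ge1.
Qed.

Lemma cumulant_bounded_moments L : cumulant_bounded (moments L).
Proof.
elim: L => [|L IH].
  apply: (cumulant_bounded_eq (cumulant_bounded_delta0 R)) => k _.
  by rewrite /moments moment_sum_below0.
have ne0 (x : R) : 1 <= x -> x != 0 by move=> x1; rewrite gt_eqF // (lt_le_trans ltr01).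
have lm0 := ne0 _ (level_moments0_ge1 L).
have m0 := ne0 _ (moments0_ge1 L).
have geo : cumulant_bounded (level_moments L).
  apply: (cumulant_bounded_geometric (expR_ge0 _)) => k k4.
  exact: level_moments_fixpoint.
apply: (cumulant_bounded_eq (cumulant_bounded_binconv lm0 m0 geo IH)) => k k4.
by rewrite moments_succ.
Qed.

Lemma moments_cvg k : (k <= 4)%N -> moments L k @[L --> \oo] --> gc_moments k.
Proof.
move=> k4; have := @moment_sum_below_cvg R E mu k.
by rewrite -[moment_sum E mu config k]fineK ?moment_sum_config_fin // => /fine_cvgP[].
Qed.

Lemma gc_moments0_ge1 : 1 <= gc_moments 0.
Proof.
rewrite -lee_fin fineK ?moment_sum_config_fin //.
by apply: moment_sum0_ge1; exists 0%N.
Qed.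

Lemma cmoment_gc_moments_le :
  cmoment gc_moments 4 <= 9 * cmoment gc_moments 2 ^+ 2 + cmoment gc_moments 2.
Proof.
have m0 : gc_moments 0 != 0 by rewrite gt_eqF // (lt_le_trans ltr01 gc_moments0_ge1).
have cv k : (0 < k)%N -> (k <= 4)%N ->
    cmoment (moments L) k @[L --> \oo] --> cmoment gc_moments k.
  move=> k0 k4; apply: cmoment_cvg => // i ik.
  by apply: moments_cvg; exact: leq_trans ik k4.
apply: (ler_cvg_to (cv 4%N isT isT)).
  apply: cvgD; last exact: cv.
  by apply: cvgM; [exact: cvg_cst | apply: cvg_exprn; exact: cv].
by apply: nearW => L; apply: cumulant_bounded_cmoment4; exact: cumulant_bounded_moments.
Qed.

Lemma fine_gc_trace_poly k (a : nat -> R) : (k <= 4)%N ->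
  (forall n, 0 <= \sum_(i < k.+1) a i * N n ^+ i) ->
  fine (gc_trace E mu (fun n => \sum_(i < k.+1) a i * N n ^+ i)) =
  \sum_(i < k.+1) a i * gc_moments i.
Proof.
move=> k4 f0.
have trace_poly (c : nat -> R) : (forall i, 0 <= c i) ->
    gc_trace E mu (fun n => \sum_(i < k.+1) c i * N n ^+ i) =
    (\sum_(i < k.+1) c i * gc_moments i)%:E.
  move=> c0; rewrite /gc_trace.
  under eq_esum do rewrite mulr_suml; under eq_esum do under eq_bigr do rewrite -mulrA.
  rewrite (esum_lincomb (c := c) (f := fun i n => N n ^+ i * gc_weight E mu n))
    => [|//|i n _ _].
    rewrite -sumEFin; apply: eq_bigr => i _; rewrite EFinM fineK // moment_sum_config_fin //.
    by apply: leq_trans k4; rewrite -ltnS.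
  exact: moment_term_ge0.
(* [esum] only sums nonnegative terms, hence the splitting a = (a + |a|) - |a|. *)
have eQ := trace_poly _ (fun i => normr_ge0 (a i)).
have eP := trace_poly (fun i => a i + `|a i|)
  (fun i => ltac:(rewrite -lerBlDr sub0r; exact: lerNnormlW)).
have Q0 n : 0 <= \sum_(i < k.+1) `|a i| * N n ^+ i.
  by apply: sumr_ge0 => i _; rewrite mulr_ge0 ?normr_ge0 ?exprn_ge0 ?num_particles_ge0.
have : (gc_trace E mu (fun n => \sum_(i < k.+1) a i * N n ^+ i)%R +
    gc_trace E mu (fun n => \sum_(i < k.+1) `|a i| * N n ^+ i)%R =
    gc_trace E mu (fun n => \sum_(i < k.+1) (a i + `|a i|) * N n ^+ i)%R)%E.
  rewrite /gc_trace -esumD => [|n _|n _]; last 2 first.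
  - by rewrite lee_fin mulr_ge0 ?f0 ?gc_weight_ge0.
  - by rewrite lee_fin mulr_ge0 ?Q0 ?gc_weight_ge0.
  apply: eq_esum => n _; rewrite -EFinD -mulrDl -big_split /=.
  by congr (_ * _)%:E; apply: eq_bigr => i _; rewrite mulrDl.
rewrite eQ eP; case: (gc_trace E mu _) => [r | |] //= [e].
apply: (addIr (\sum_(i < k.+1) `|a i| * gc_moments i)); rewrite e -big_split /=.
by apply: eq_bigr => i _; rewrite mulrDl.
Qed.

Lemma central_moment_gc_moments k : ~~ odd k -> (k <= 4)%N ->
  central_moment E mu k = cmoment gc_moments k.
Proof.
move=> ek k4; rewrite /central_moment.
have -> : Nbar E mu = normalize gc_moments 1 by rewrite /Nbar /gc_expect Zgc_moment_sum.
set c := normalize gc_moments 1.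
have binomial n : (N n - c) ^+ k = \sum_(i < k.+1) 'C(k, i)%:R * (- c) ^+ (k - i) * N n ^+ i.
  by rewrite addrC exprDn; apply: eq_bigr => i _; rewrite -mulr_natr; ring.
rewrite /gc_expect Zgc_moment_sum -/(gc_moments 0).
under eq_fun do rewrite binomial.
rewrite (fine_gc_trace_poly (a := fun i => 'C(k, i)%:R * (- c) ^+ (k - i))) // => [|n].
  by rewrite mulr_suml; apply: eq_bigr => i _; rewrite -mulrA.
by rewrite -binomial exprn_even_ge0.
Qed.

End GibbsMoments.

Theorem lemmaA5 (R : realType) (E : nat -> R) (mu : R)
  (hE0 : forall j, 0 <= E j)
  (hEmono : forall i j : nat, (i <= j)%N -> E i <= E j)
  (hmu : mu < E 0%N)
  (hZ : (Zgc E mu < +oo)%E)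
  (hmom : (gc_trace E mu (fun n => (@num_particles R n ^+ 4)%R) < +oo)%E) :
  central_moment E mu 4 <= 9 * central_moment E mu 2 ^+ 2 + central_moment E mu 2.
Proof.
(* The bound only needs the finiteness hypotheses hZ and hmom. *)
rewrite !central_moment_gc_moments //.
exact: cmoment_gc_moments_le.
Qed.
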